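(* Let $\mathcal V$, $\mathcal W$, $\mathcal Z$ be complex Hilbert spaces and let $R:\mathcal Z\supset\operatorname{dom}R\to\mathcal V\times\mathcal W$ be a linear operator. Let $P_{\mathcal V}$ and $P_{\mathcal W}$ denote the canonical projections of $\mathcal V\times\mathcal W$ onto $\mathcal V$ and $\mathcal W$, and regard $P_{\mathcal V}R$ and $P_{\mathcal W}R$ as operators with domain $\operatorname{dom}R$. Then the following statements are equivalent: (i) $R$ is closed, and $P_{\mathcal V}R$ is closed with domain $\operatorname{dom}(P_{\mathcal V}R)=\operatorname{dom}R$; (ii) $P_{\mathcal V}R$ is closed with domain $\operatorname{dom}(P_{\mathcal V}R)=\operatorname{dom}R$, and $P_{\mathcal W}R\in L(\operatorname{dom}(P_{\mathcal V}R),\mathcal W)$; (iii) $R$ is closed, and $P_{\mathcal W}R\in L(\operatorname{dom}(P_{\mathcal V}R),\mathcal W)$.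
   Context: Here $\operatorname{dom}(P_{\mathcal V}R)=\operatorname{dom}R$ is equipped with the graph norm $\|z\|=(\|z\|_{\mathcal Z}^2+\|P_{\mathcal V}Rz\|_{\mathcal V}^2)^{1/2}$, and $L(\cdot,\cdot)$ denotes the space of bounded linear operators. *)

From HB Require Import structures.
From mathcomp Require Import all_boot all_order all_algebra.
From mathcomp Require Import all_classical all_reals all_analysis.
From mathcomp.real_closed Require Import complex.
Set Implicit Arguments. Unset Strict Implicit. Unset Printing Implicit Defensive.
Import Order.TTheory GRing.Theory Num.Theory.
Local Open Scope ring_scope.
Local Open Scope classical_set_scope.

(* An inner product on a normed space over C = R[i] inducing its norm:
   linear in the first argument, Hermitian, and <x,x> = ||x||^2
   (positive definiteness follows from the last clause). *)
Definition inner_product_of_norm (R : realType) (V : normedModType R[i])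
  (ip : V -> V -> R[i]) : Prop :=
  [/\ forall (a : R[i]) (x1 x2 y : V), ip (a *: x1 + x2) y = a * ip x1 y + ip x2 y,
      forall x y : V, ip y x = (ip x y)^*
    & forall x : V, ip x x = `|x| ^+ 2].

Definition is_hilbert (R : realType) (V : completeNormedModType R[i]) : Prop :=
  exists ip : V -> V -> R[i], inner_product_of_norm ip.

Definition linear_subspace (R : realType) (Z : normedModType R[i]) (D : set Z) : Prop :=
  [/\ D 0,
      forall x y, D x -> D y -> D (x + y)
    & forall (a : R[i]) x, D x -> D (a *: x)].

Definition linear_on (R : realType) (Z : normedModType R[i]) (Y : lmodType R[i])
  (D : set Z) (f : Z -> Y) : Prop :=
  forall (a : R[i]) x y, D x -> D y -> f (a *: x + y) = a *: f x + f y.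

Definition closed_op (R : realType) (Z : normedModType R[i]) (Y : topologicalType)
  (D : set Z) (f : Z -> Y) : Prop :=
  closed [set p : Z * Y | D p.1 /\ p.2 = f p.1].

Definition graph_norm (R : realType) (Z V : normedModType R[i]) (g : Z -> V) (z : Z) : R[i] :=
  sqrtC (`|z| ^+ 2 + `|g z| ^+ 2).

(* f belongs to L(dom g, Y), where dom g = D carries the graph norm of g:
   f is linear on D and bounded w.r.t. the graph norm. *)
Definition bounded_graph_norm (R : realType) (Z V Y : normedModType R[i])
  (D : set Z) (g : Z -> V) (f : Z -> Y) : Prop :=
  linear_on D f /\
  exists c : R, forall z, D z -> `|f z| <= real_complex R c * graph_norm g z.

(* Write f = P_V R and g = P_W R.  A bound |g z| <= K (|z| + |f z|) on dom R makes
   g z_t Cauchy along any filter on dom R along which z_t and f z_t converge, and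
   makes g continuous there at points of dom R; with closedness of f this gives
   (ii) => (iii), and with closedness of R it gives (iii) => (i).
   For (i) => (ii), dom R normed by |z| + |f z| is a Banach space because f is
   closed, and g has a closed graph on it because R is closed, so the closed graph
   theorem bounds g.  That theorem, for a map h with closed graph, comes from
   Baire's theorem: some sublevel set {x | |h x| <= n} is dense in a ball, so by
   translation and scaling every y is a limit of points a with |h a| <= K |y|;
   approximating the successive remainders writes y = sum_k a_k with
   |h a_k| <= K |y| 2^-k, and the closed graph identifies sum_k h a_k with h y. *)

From HB Require Import structures.
From mathcomp Require Import all_boot all_order all_algebra.
From mathcomp Require Import all_classical all_reals all_analysis.
From mathcomp.real_closed Require Import complex.
From mathcomp.algebra_tactics Require Import ring.
Set Implicit Arguments. Unset Strict Implicit. Unset Printing Implicit Defensive.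
Import Order.TTheory GRing.Theory Num.Theory numFieldNormedType.Exports.
Local Open Scope ring_scope.
Local Open Scope classical_set_scope.
Local Open Scope complex_scope.

Section real_complex.
Variable R : rcfType.

Lemma complex_gt0_real (e : R[i]) : 0 < e -> exists2 r : R, 0 < r & e = r%:C.
Proof.
move=> e0; exists (complex.Re e); first by move: e0; rewrite ltcE => /andP[].
by rewrite RRe_real // gtr0_real.
Qed.

Lemma ger0_ReK (e : R[i]) : 0 <= e -> (complex.Re e)%:C = e.
Proof. by move=> e0; rewrite RRe_real // ger0_real. Qed.

Lemma normc_real (r : R) : `|r%:C| = `|r|%:C.
Proof. by rewrite normc_def /= expr0n addr0 sqrtr_sqr. Qed.

End real_complex.

Section linear_subspace.
Variables (R : realType) (Z : normedModType R[i]) (D : set Z).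
Hypothesis hD : linear_subspace D.

Lemma subspace0 : D 0. Proof. by case: hD. Qed.
Lemma subspaceD x y : D x -> D y -> D (x + y). Proof. by case: hD => _ + _; apply. Qed.
Lemma subspaceZ a x : D x -> D (a *: x). Proof. by case: hD => _ _; apply. Qed.
Lemma subspaceN x : D x -> D (- x).
Proof. by move=> /(subspaceZ (-1)); rewrite scaleN1r. Qed.
Lemma subspaceB x y : D x -> D y -> D (x - y).
Proof. by move=> Dx /subspaceN; apply: subspaceD. Qed.

Variables (Y : lmodType R[i]) (h : Z -> Y).
Hypothesis hh : linear_on D h.

Lemma linear_on0 : h 0 = 0.
Proof.
have := hh 1 subspace0 subspace0; rewrite !scale1r addr0.
by move/(congr1 (fun v => v - h 0)); rewrite addrK subrr.
Qed.

Lemma linear_onD x y : D x -> D y -> h (x + y) = h x + h y.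
Proof. by move=> Dx Dy; rewrite -[x]scale1r hh // !scale1r. Qed.

Lemma linear_onZ a x : D x -> h (a *: x) = a *: h x.
Proof.
move=> Dx; have := hh a Dx subspace0.
by rewrite addr0 linear_on0 addr0.
Qed.

Lemma linear_onB x y : D x -> D y -> h (x - y) = h x - h y.
Proof.
by move=> Dx Dy; have := hh (-1) Dy Dx; rewrite !scaleN1r addrC => ->; rewrite addrC.
Qed.

End linear_subspace.

Lemma closure_normP (K : numFieldType) (X : normedModType K) (A : set X) (y : X) :
  closure A y <-> forall e, 0 < e -> exists2 a, A a & `|y - a| < e.
Proof.
split=> [yA e e0 | yA B /nbhs_ballP[e e0 yeB]].
  by have [a [Aa]] := yA _ (nbhsx_ballx y e e0); rewrite -ball_normE; exists a.
by have [a Aa ya] := yA e e0; exists a; split; last by apply: yeB; rewrite -ball_normE.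
Qed.

Lemma closed_opP (R : realType) (Z : normedModType R[i]) (Y : topologicalType)
    (D : set Z) (f : Z -> Y) :
  closed_op D f <->
  forall (T : Type) (F : set_system T), ProperFilter F ->
  forall (u : T -> Z) (z : Z) (y : Y), (\forall t \near F, D (u t)) ->
    u @ F --> z -> (fun t => f (u t)) @ F --> y -> D z /\ y = f z.
Proof.
split=> [cf T F PF u z y Du uz fuy | cf p].
  have ufu : (fun t => (u t, f (u t))) @ F --> (z, y) by exact: cvg_pair uz fuy.
  by apply: (closed_cvg _ cf _ _ ufu); apply: filterS Du.
rewrite closureEcvg => -[G PG [Gp GE]].
have GD : G [set q | D q.1 /\ q.2 = f q.1] by apply: GE.
apply: (cf _ G PG fst); first by apply: filterS GD => q [].
  exact: cvg_comp Gp cvg_fst.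
apply: cvg_trans (cvg_comp _ _ Gp cvg_snd).
by apply: near_eq_cvg; apply: filterS GD => q [].
Qed.

Lemma cvg_series_dominated (R : realType) (W : completeNormedModType R[i])
    (u : W ^nat) (v : R ^nat) :
  (forall k, `|u k| <= (v k)%:C) -> cvgn (series v) -> cvgn (series u).
Proof.
move=> uv /cvg_cauchy/cauchy_seriesP v_cauchy.
apply/cauchy_cvgP/cauchy_seriesP => _ /complex_gt0_real[e e0 ->].
apply: filterS (v_cauchy e e0) => n sv_lt.
apply: le_lt_trans (ler_norm_sum _ _ _) _.
apply: le_lt_trans (ler_sum _ (fun k _ => uv k)) _.
by rewrite -rmorph_sum ltcR (le_lt_trans (ler_norm _)).
Qed.

Lemma series_geometric_half_le (R : realFieldType) (a : R) n :
  0 <= a -> series (geometric a 2^-1) n <= a * 2.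
Proof.
move=> a0; rewrite geometric_seriesE; last by rewrite lt_eqF // invf_lt1 ?ltr1n.
have -> : 1 - 2^-1 = 2^-1 :> R by field.
rewrite /= invrK -mulrA ler_wpM2l // ger_pMl // gerBl.
Qed.

Section closed_graph_theorem.
Variables (R : realType) (X : completeNormedModType R) (W : completeNormedModType R[i]).
Variable h : X -> W.
Hypothesis h_add : {morph h : x y / x + y}.
Hypothesis h_scale : forall (t : R) x, h (t *: x) = t%:C *: h x.
Hypothesis h_closed : closed [set p : X * W | p.2 = h p.1].

Let h0 : h 0 = 0.
Proof. by rewrite -(scale0r (0 : X)) h_scale scale0r. Qed.

Let hB x y : h (x - y) = h x - h y.
Proof. by rewrite h_add -scaleN1r h_scale rmorphN1 scaleN1r. Qed.

Let sublevel (M : R) := [set x : X | `|h x| <= M%:C].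

Lemma sublevel_closureB M N x y : closure (sublevel M) x -> closure (sublevel N) y ->
  closure (sublevel (M + N)) (x - y).
Proof.
move=> /closure_normP xM /closure_normP yN; apply/closure_normP => e e0.
have e2 : 0 < e / 2 by rewrite divr_gt0.
have [a Ma xa] := xM _ e2; have [b Nb yb] := yN _ e2.
exists (a - b).
  by rewrite /sublevel /= hB rmorphD; apply: le_trans (ler_normB _ _) (lerD Ma Nb).
have -> : x - y - (a - b) = (x - a) - (y - b).
  by rewrite !opprB addrACA [in RHS]addrACA (addrC (- y)).
by rewrite (splitr e); apply: le_lt_trans (ler_normB _ _) (ltrD xa yb).
Qed.

Lemma sublevel_closureZ M t x : 0 < t -> closure (sublevel M) x ->
  closure (sublevel (t * M)) (t *: x).
Proof.
move=> t0 /closure_normP xM; apply/closure_normP => e e0.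
have [a Ma xa] := xM (e / t) (divr_gt0 e0 t0).
exists (t *: a).
  rewrite /sublevel /= h_scale normrZ normc_real gtr0_norm // rmorphM.
  by rewrite ler_wpM2l // ler0c ltW.
by rewrite -scalerBr normrZ gtr0_norm // -ltr_pdivlMl // mulrC.
Qed.

Lemma baire_sublevel : exists n (x0 : X) (r : R),
  0 < r /\ ball x0 r `<=` closure (sublevel n%:R).
Proof.
have [n not_dense] : exists n, ~ dense (~` closure (sublevel n%:R)).
  apply/existsNP => dense_compl.
  have : dense (\bigcap_n ~` closure (sublevel n%:R)).
    apply: Baire => n; split; last exact: dense_compl.
    by rewrite openC; exact: closed_closure.
  move=> /(_ setT) [||x [_ /= x_out]]; [by exists 0 | exact: openT |].
  apply: (x_out (Num.truncn (complex.Re `|h x|)).+1 Logic.I).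
  apply: subset_closure; rewrite /sublevel /= -(ger0_ReK (normr_ge0 (h x))) lecR.
  exact/ltW/truncnS_gt.
have [U [[x0 x0U] UA]] := denseNE not_dense.
have /nbhs_ballP[r r0 rU] := open_nbhs_nbhs x0U.
exists n, x0, r; split=> // y /rU Uy; apply: contrapT => yA.
have : (U `&` ~` closure (sublevel n%:R)) y by [].
by rewrite UA.
Qed.

Lemma sublevel_homogeneous :
  exists2 K : R, 0 <= K & forall y, closure (sublevel (K * `|y|)) y.
Proof.
have [n [x0 [r [r0 ballA]]]] := baire_sublevel.
have ballA2 y : `|y| < r -> closure (sublevel (n%:R + n%:R)) y.
  move=> yr; rewrite -(addrK x0 y); apply: sublevel_closureB; apply: ballA.
    by rewrite -ball_normE /= opprD addrCA subrr addr0 normrN.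
  exact: ballxx.
exists ((n%:R + n%:R) * 2 / r) => [|y]; first by rewrite divr_ge0 ?mulr_ge0 // ltW.
have [->|y0] := eqVneq y 0.
  by apply: subset_closure; rewrite /sublevel /= h0 !normr0 mulr0.
have ny0 : 0 < `|y| by rewrite normr_gt0.
pose t := `|y| * 2 / r.
have t0 : 0 < t by rewrite divr_gt0 ?mulr_gt0.
have -> : (n%:R + n%:R) * 2 / r * `|y| = t * (n%:R + n%:R).
  by rewrite /t; field; rewrite gt_eqF.
rewrite -[X in closure _ X](scalerKV (lt0r_neq0 t0)).
apply: (sublevel_closureZ t0 (ballA2 _ _)).
rewrite normrZ gtr0_norm ?invr_gt0 //.
have -> : t^-1 * `|y| = r / 2 by rewrite /t; field; rewrite !gt_eqF.
by rewrite ltr_pdivrMr // ltr_pMr // ltr1n.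
Qed.

Lemma sublevel_series K : 0 <= K -> (forall y, closure (sublevel (K * `|y|)) y) ->
  forall y, exists2 a : X ^nat,
    forall k, `|h (a k)| <= (geometric (K * `|y|) 2^-1 k)%:C & series a @ \oo --> y.
Proof.
move=> K0 HK y.
have [->|y0] := eqVneq y 0.
  exists (fun=> 0) => [k|]; first by rewrite h0 /= !normr0 mulr0 mul0r.
  rewrite (_ : series _ = fun=> 0); first exact: cvg_cst.
  by apply/funext => n; rewrite /series /= big1.
pose q : R := 2^-1.
have q0 : 0 < q by rewrite invr_gt0.
have q1 : `|q| < 1 by rewrite gtr0_norm // invf_lt1 // ltr1n.
have /choice[next nextP] : forall p : X * nat, exists a : X,
    `|h a| <= (K * `|p.1|)%:C /\ `|p.1 - a| < `|y| * q ^+ p.2.+1.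
  move=> [z k]; have /closure_normP/(_ (`|y| * q ^+ k.+1)) := HK z.
  by case=> [|a]; [rewrite mulr_gt0 ?normr_gt0 ?exprn_gt0 | exists a].
pose fix rem k := if k is k'.+1 then rem k' - next (rem k', k') else y.
have rem_le k : `|rem k| <= `|y| * q ^+ k.
  case: k => [|k]; first by rewrite expr0 mulr1.
  exact: ltW (nextP (rem k, k)).2.
exists (fun k => next (rem k, k)) => [k|].
  apply: le_trans (nextP (rem k, k)).1 _.
  by rewrite lecR /= -mulrA ler_wpM2l.
have remE n : series (fun k => next (rem k, k)) n = y - rem n.
  elim: n => [|n IH]; first by rewrite /series /= big_geq // subrr.
  by rewrite seriesSr IH /= opprB addrA addrAC.
rewrite (funext remE) -[y in _ --> y]subr0; apply: cvgB; first exact: cvg_cst.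
apply/cvgr0Pnorm_lt => e e0.
have /cvgr0_norm_lt/(_ e e0) := cvg_geometric `|y| q1.
apply: filterS => n.
rewrite ger0_norm ?geometric_ge0 ?(ltW q0) //=.
exact: le_lt_trans (rem_le n).
Qed.

Theorem closed_graph_bounded :
  exists2 C : R, 0 <= C & forall x, `|h x| <= (C * `|x|)%:C.
Proof.
have [K K0 HK] := sublevel_homogeneous.
exists (K * 2 + 1) => [|y]; first by rewrite addr_ge0 ?mulr_ge0.
have [->|y0] := eqVneq y 0; first by rewrite h0 !normr0 mulr0.
have [a ha sa] := sublevel_series K0 HK y.
have q1 : `|2^-1 : R| < 1 by rewrite gtr0_norm ?invr_gt0 // invf_lt1 // ltr1n.
have /cvg_ex[w hw] : cvgn (series (h \o a)).
  exact: (cvg_series_dominated (u := h \o a) ha (is_cvg_geometric_series q1)).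
have h_series n : h (series a n) = series (h \o a) n.
  by rewrite /series /= (big_morph h h_add h0).
have wE : w = h y.
  have ha_cvg : (fun n => (series a n, h (series a n))) @ \oo --> (y, w).
    by apply: cvg_pair => //; rewrite (funext h_series).
  by apply: (closed_cvg _ h_closed _ _ ha_cvg); apply: nearW.
have ny0 : 0 < `|y|%:C by rewrite ltcE /= eqxx normr_gt0.
near \oo => n.
rewrite -wE -(subrK (series (h \o a) n) w) mulrDl mul1r rmorphD addrC.
apply: le_trans (ler_normD _ _) (lerD _ _); last first.
  by apply: ltW; near: n; exact: cvgr_dist_lt hw _ ny0.
apply: le_trans (ler_norm_sum _ _ _) _.
apply: le_trans (ler_sum _ (fun k _ => ha k)) _.
rewrite -rmorph_sum lecR mulrAC.
exact: series_geometric_half_le (mulr_ge0 K0 (normr_ge0 y)).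
Unshelve. all: by end_near. Qed.

End closed_graph_theorem.

Section graph_norm.
Variables (R : realType) (Z V : normedModType R[i]) (f : Z -> V).

Let le_sqrtC_sum2 (a b : R[i]) : 0 <= a -> 0 <= b -> a <= sqrtC (a ^+ 2 + b ^+ 2).
Proof.
move=> a0 b0; rewrite -{1}(sqrCK a0) ler_sqrtC ?nnegrE ?addr_ge0 ?exprn_ge0 //.
by rewrite lerDl exprn_ge0.
Qed.

Lemma graph_norm_ge_norm z : `|z| <= graph_norm f z.
Proof. exact: le_sqrtC_sum2. Qed.

Lemma graph_norm_ge_norm_op z : `|f z| <= graph_norm f z.
Proof. by rewrite /graph_norm addrC; exact: le_sqrtC_sum2. Qed.

Lemma graph_norm_le z : graph_norm f z <= `|z| + `|f z|.
Proof.
rewrite /graph_norm -(sqrCK (addr_ge0 (normr_ge0 z) (normr_ge0 (f z)))).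
rewrite ler_sqrtC ?nnegrE ?addr_ge0 ?exprn_ge0 //.
by rewrite sqrrD -addrA lerD2l lerDr mulrn_wge0 // mulr_ge0.
Qed.

Lemma bounded_graph_normP (W : normedModType R[i]) (D : set Z) (g : Z -> W) :
  bounded_graph_norm D f g <->
  linear_on D g /\
  exists2 K : R, 0 <= K & forall z, D z -> `|g z| <= K%:C * (`|z| + `|f z|).
Proof.
split=> [[hg [c gc]] | [hg [c c0 gc]]]; split=> //.
  exists `|c| => // z Dz; apply: le_trans (gc z Dz) _.
  have c_le : c%:C <= `|c|%:C by rewrite lecR ler_norm.
  have gn0 : 0 <= graph_norm f z by rewrite sqrtC_ge0 addr_ge0 ?exprn_ge0.
  apply: le_trans (ler_wpM2r gn0 c_le) _.
  by rewrite ler_wpM2l ?ler0c // graph_norm_le.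
exists (c * 2) => z Dz; apply: le_trans (gc z Dz) _.
rewrite rmorphM rmorph_nat -mulrA ler_wpM2l ?ler0c // mulr_natl mulr2n.
by rewrite lerD ?graph_norm_ge_norm ?graph_norm_ge_norm_op.
Qed.

End graph_norm.

Lemma exists_small_factor (R : realFieldType) (K e : R) :
  0 <= K -> 0 < e -> exists2 d : R, 0 < d & K * d < e.
Proof.
move=> K0 e0; have K1 : 0 < K + 1 by rewrite ltr_wpDl.
exists (e / (K + 1)); first by rewrite divr_gt0.
by rewrite mulrCA gtr_pMr // ltr_pdivrMr // mul1r ltrDl.
Qed.

Section graph_bounded.
Variables (R : realType) (Z V W : normedModType R[i]) (D : set Z).
Variables (f : Z -> V) (g : Z -> W) (K : R).
Hypotheses (hD : linear_subspace D) (hf : linear_on D f) (hg : linear_on D g).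
Hypotheses (K0 : 0 <= K) (gK : forall z, D z -> `|g z| <= K%:C * (`|z| + `|f z|)).

Lemma graph_bounded_dist x y : D x -> D y ->
  `|g x - g y| <= K%:C * (`|x - y| + `|f x - f y|).
Proof.
by move=> Dx Dy; rewrite -(linear_onB hg) // -(linear_onB hf) // gK //; exact: subspaceB.
Qed.

Lemma graph_bounded_cvg (T : Type) (F : set_system T) {FF : Filter F} (u : T -> Z) z :
  (\forall t \near F, D (u t)) -> D z -> u @ F --> z ->
  (fun t => f (u t)) @ F --> f z -> (fun t => g (u t)) @ F --> g z.
Proof.
move=> Du Dz uz fuz; apply/cvgrPdist_lt => _ /complex_gt0_real[e e0 ->].
have [d d0 Kd] := exists_small_factor K0 e0.
have d2 : 0 < (d / 2)%:C by rewrite ltcR divr_gt0.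
near=> t.
have Dut : D (u t) by near: t.
apply: le_lt_trans (graph_bounded_dist Dz Dut) _.
apply: le_lt_trans (_ : K%:C * d%:C < e%:C); last by rewrite -rmorphM ltcR.
rewrite ler_wpM2l ?ler0c // (splitr d) rmorphD ltW // ltrD //; near: t.
  exact: cvgr_dist_lt uz _ d2.
exact: cvgr_dist_lt fuz _ d2.
Unshelve. all: by end_near. Qed.

Lemma graph_bounded_cauchy (T : Type) (F : set_system T) {PF : ProperFilter F}
    (u : T -> Z) (z : Z) (v : V) :
  (\forall t \near F, D (u t)) -> u @ F --> z -> (fun t => f (u t)) @ F --> v ->
  cauchy ((fun t => g (u t)) @ F).
Proof.
move=> Du uz fuv; apply: cauchy_exP => _ /complex_gt0_real[e e0 ->].
have [d d0 Kd] := exists_small_factor K0 e0.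
have d4 : 0 < (d / 4)%:C by rewrite ltcR divr_gt0.
have near_uz : \forall t \near F,
    [/\ D (u t), `|z - u t| < (d / 4)%:C & `|v - f (u t)| < (d / 4)%:C].
  near=> t; split; near: t; [exact: Du | exact: cvgr_dist_lt uz _ d4 |].
  exact: cvgr_dist_lt fuv _ d4.
have [t0 [Dut0 zu0 vfu0]] := filter_ex near_uz.
exists (g (u t0)); apply: filterS near_uz => t [Dut zu vfu].
rewrite -ball_normE /=; apply: le_lt_trans (graph_bounded_dist Dut0 Dut) _.
apply: le_lt_trans (_ : K%:C * d%:C < e%:C); last by rewrite -rmorphM ltcR.
have quarters (X : normedModType R[i]) (a b c : X) :
    `|a - b| < (d / 4)%:C -> `|a - c| < (d / 4)%:C -> `|b - c| <= (d / 2)%:C.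
  move=> ab ac; have -> : b - c = (a - c) - (a - b).
    by rewrite [in RHS]opprB [RHS]addrC [RHS]addrA subrK.
  apply: le_trans (ler_normB _ _) _.
  by rewrite (_ : d / 2 = d / 4 + d / 4) ?rmorphD ?ltW ?ltrD //; field.
rewrite ler_wpM2l ?ler0c // (splitr d) rmorphD.
by apply: lerD; [exact: quarters zu0 zu | exact: quarters vfu0 vfu].
Unshelve. all: by end_near. Qed.

End graph_bounded.

Section closed_op_from_bound.
Variables (R : realType) (Z V : normedModType R[i]) (D : set Z) (f : Z -> V).
Hypotheses (hD : linear_subspace D) (hf : linear_on D f).

Lemma closed_op_pair (W : normedModType R[i]) (g : Z -> W) :
  closed_op D f -> bounded_graph_norm D f g -> closed_op D (fun z => (f z, g z)).
Proof.
move=> f_closed /bounded_graph_normP[hg [K K0 gK]].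
apply/closed_opP => T F PF u z [v w] Du uz fgu.
have fuv : (fun t => f (u t)) @ F --> v by exact: cvg_comp _ _ fgu cvg_fst.
have [Dz vE] := (closed_opP D f).1 f_closed T F PF u z v Du uz fuv.
have fu : (fun t => f (u t)) @ F --> f z by rewrite -vE.
have wE : w = g z.
  apply: (cvg_unique (@norm_hausdorff _ W) (cvg_comp _ _ fgu cvg_snd)).
  exact: (graph_bounded_cvg hD hf hg K0 gK (F := F) Du Dz uz fu).
by rewrite vE wE.
Qed.

Lemma closed_op_fst (W : completeNormedModType R[i]) (g : Z -> W) :
  closed_op D (fun z => (f z, g z)) -> bounded_graph_norm D f g -> closed_op D f.
Proof.
move=> fg_closed /bounded_graph_normP[hg [K K0 gK]].
apply/closed_opP => T F PF u z v Du uz fu.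
have gu_cauchy : cauchy ((fun t => g (u t)) @ F).
  exact: (graph_bounded_cauchy hD hf hg K0 gK Du uz fu).
have [w gu] := (cvg_ex _).1 (cauchy_cvg _ gu_cauchy).
have fgu : (fun t => (f (u t), g (u t))) @ F --> (v, w) by exact: cvg_pair fu gu.
by have [Dz [<- _]] := (closed_opP D _).1 fg_closed T F PF u z (v, w) Du uz fgu.
Qed.

End closed_op_from_bound.

Section dist_dominated.
Variables (R : realType) (X : normedModType R) (Y : normedModType R[i]) (phi : X -> Y).
Hypothesis phi_dist : forall a b, `|phi a - phi b| <= `|a - b|%:C.

Lemma cvg_dist_dominated (T : Type) (F : set_system T) {FF : Filter F} (u : T -> X) x :
  u @ F --> x -> (fun t => phi (u t)) @ F --> phi x.
Proof.
move=> /cvgrPdist_lt ux; apply/cvgrPdist_lt => _ /complex_gt0_real[e e0 ->].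
apply: filterS (ux e e0) => t xu.
by apply: (le_lt_trans (phi_dist x (u t))); rewrite ltcR.
Qed.

Lemma cauchy_dist_dominated (F : set_system X) {PF : ProperFilter F} :
  cauchy F -> cauchy (phi @ F).
Proof.
move=> /cauchyP F_cauchy; apply: cauchy_exP => _ /complex_gt0_real[e e0 ->].
have [x Fx] := F_cauchy e e0; exists (phi x).
suff : F [set y | ball (phi x) e%:C (phi y)] by [].
apply: filterS Fx => y; rewrite -!ball_normE /ball_ /= => xy.
by apply: (le_lt_trans (phi_dist x y)); rewrite ltcR.
Qed.

End dist_dominated.

Section graph_space.
Variables (R : realType) (Z V : completeNormedModType R[i]) (D : set Z) (f : Z -> V).
Hypotheses (hD : linear_subspace D) (hf : linear_on D f) (f_closed : closed_op D f).

(* [dom f] normed by [|z| + |f z|], equivalent to the graph norm. *)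
Definition graph_space := {z : Z | D z}.
HB.instance Definition _ := gen_eqMixin graph_space.
HB.instance Definition _ := gen_choiceMixin graph_space.

Definition graph_zero : graph_space := exist _ 0 (subspace0 hD).
Definition graph_add (x y : graph_space) : graph_space :=
  exist _ (sval x + sval y) (subspaceD hD (svalP x) (svalP y)).
Definition graph_opp (x : graph_space) : graph_space :=
  exist _ (- sval x) (subspaceN hD (svalP x)).
Definition graph_scale (t : R) (x : graph_space) : graph_space :=
  exist _ (t%:C *: sval x) (subspaceZ hD _ (svalP x)).

Lemma graph_addA : associative graph_add.
Proof. by move=> x y z; apply: eq_exist; rewrite addrA. Qed.
Lemma graph_addC : commutative graph_add.
Proof. by move=> x y; apply: eq_exist; rewrite addrC. Qed.
Lemma graph_add0 : left_id graph_zero graph_add.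
Proof. by case=> x Dx; apply: eq_exist; rewrite add0r. Qed.
Lemma graph_addN : left_inverse graph_zero graph_opp graph_add.
Proof. by move=> x; apply: eq_exist; rewrite addNr. Qed.
HB.instance Definition _ :=
  GRing.isZmodule.Build graph_space graph_addA graph_addC graph_add0 graph_addN.

Lemma graph_scaleA a b x : graph_scale a (graph_scale b x) = graph_scale (a * b) x.
Proof. by apply: eq_exist; rewrite scalerA rmorphM. Qed.
Lemma graph_scale1 : left_id 1 graph_scale.
Proof. by case=> x Dx; apply: eq_exist; rewrite rmorph1 scale1r. Qed.
Lemma graph_scaleDr : right_distributive graph_scale +%R.
Proof. by move=> a x y; apply: eq_exist; rewrite scalerDr. Qed.
Lemma graph_scaleDl x : {morph graph_scale^~ x : a b / a + b}.
Proof. by move=> a b; apply: eq_exist; rewrite rmorphD scalerDl. Qed.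
HB.instance Definition _ := GRing.Zmodule_isLmodule.Build R graph_space
  graph_scaleA graph_scale1 graph_scaleDr graph_scaleDl.

Definition graph_space_norm (x : graph_space) : R :=
  complex.Re (`|sval x| + `|f (sval x)|).

Lemma graph_space_normE x : (graph_space_norm x)%:C = `|sval x| + `|f (sval x)|.
Proof. by rewrite ger0_ReK // addr_ge0. Qed.

Lemma graph_space_normD x y :
  graph_space_norm (x + y) <= graph_space_norm x + graph_space_norm y.
Proof.
rewrite -lecR rmorphD /= !graph_space_normE /= (linear_onD hf (svalP x) (svalP y)).
by rewrite addrACA lerD // ler_normD.
Qed.

Lemma graph_space_normZ (t : R) x :
  graph_space_norm (t *: x) = `|t| * graph_space_norm x.
Proof.
apply: (@complexI R); rewrite rmorphM /= !graph_space_normE /=.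
by rewrite (linear_onZ hD hf _ (svalP x)) !normrZ normc_real mulrDr.
Qed.

Lemma graph_space_norm_eq0 x : graph_space_norm x = 0 -> x = 0.
Proof.
case: x => z Dz /(congr1 (real_complex R)); rewrite graph_space_normE /= => /eqP.
rewrite paddr_eq0 // => /andP[/eqP /normr0_eq0 x0 _].
exact: eq_exist.
Qed.

HB.instance Definition _ := Lmodule_isNormed.Build R graph_space
  graph_space_normD graph_space_normZ graph_space_norm_eq0.

Lemma graph_space_normC (x : graph_space) : `|x|%:C = `|sval x| + `|f (sval x)|.
Proof. exact: graph_space_normE. Qed.

Lemma sval_graphB (x y : graph_space) : sval (x - y) = sval x - sval y.
Proof. by []. Qed.

Lemma sval_dist (x y : graph_space) : `|sval x - sval y| <= `|x - y|%:C.
Proof. by rewrite graph_space_normC sval_graphB lerDl. Qed.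

Lemma f_sval_dist (x y : graph_space) : `|f (sval x) - f (sval y)| <= `|x - y|%:C.
Proof.
by rewrite graph_space_normC sval_graphB -(linear_onB hf (svalP x) (svalP y)) lerDr.
Qed.

Lemma graph_space_complete (F : set_system graph_space) :
  ProperFilter F -> cauchy F -> cvg F.
Proof.
move=> PF F_cauchy.
have [z zF] :=
  (cvg_ex _).1 (cauchy_cvg _ (cauchy_dist_dominated sval_dist F_cauchy)).
have [v vF] :=
  (cvg_ex _).1 (cauchy_cvg _ (cauchy_dist_dominated f_sval_dist F_cauchy)).
have Du : \forall x \near F, D (sval x) by apply: nearW; exact: svalP.
have [Dz vE] := (closed_opP D f).1 f_closed _ F PF sval z v Du zF vF.
apply/cvg_ex; exists (exist _ z Dz); apply/fcvgrPdist_lt => e e0.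
have e2 : 0 < (e / 2)%:C by rewrite ltcR divr_gt0.
near=> x.
rewrite -ltcR graph_space_normC sval_graphB /= (linear_onB hf Dz (svalP x)) -vE.
rewrite (splitr e) rmorphD ltrD //; near: x.
  exact: cvgr_dist_lt zF _ e2.
exact: cvgr_dist_lt vF _ e2.
Unshelve. all: by end_near. Qed.

HB.instance Definition _ := Uniform_isComplete.Build graph_space graph_space_complete.

Variables (W : completeNormedModType R[i]) (g : Z -> W).
Hypotheses (hg : linear_on D g) (fg_closed : closed_op D (fun z => (f z, g z))).

Let gG (x : graph_space) : W := g (sval x).

Let gG_closed : closed [set p : graph_space * W | p.2 = gG p.1].
Proof.
move=> p; rewrite closureEcvg => -[F PF [Fp FE]].
have FgG : F [set q | q.2 = gG q.1] by apply: FE.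
have p1 : fst @ F --> p.1 by exact: cvg_comp Fp cvg_fst.
have u_cvg : (fun q => sval q.1) @ F --> sval p.1.
  exact: (cvg_dist_dominated sval_dist p1).
have fu_cvg : (fun q => f (sval q.1)) @ F --> f (sval p.1).
  exact: (cvg_dist_dominated f_sval_dist p1).
have gu_cvg : (fun q => g (sval q.1)) @ F --> p.2.
  apply: cvg_trans (cvg_comp _ _ Fp cvg_snd).
  by apply: near_eq_cvg; apply: filterS FgG => q.
have fgu : (fun q => (f (sval q.1), g (sval q.1))) @ F --> (f (sval p.1), p.2).
  exact: cvg_pair fu_cvg gu_cvg.
have Du : \forall q \near F, D (sval q.1) by apply: nearW => q; exact: svalP.
by have [_ [pE]] := (closed_opP D _).1 fg_closed _ F PF _ _ _ Du u_cvg fgu.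
Qed.

Lemma closed_graph_bounded_graph_norm : bounded_graph_norm D f g.
Proof.
apply/bounded_graph_normP; split=> //.
have gG_add : {morph gG : x y / x + y}.
  by move=> x y; exact: (linear_onD hg (svalP x) (svalP y)).
have gG_scale (t : R) x : gG (t *: x) = t%:C *: gG x.
  exact: (linear_onZ hD hg _ (svalP x)).
have [C C0 gC] := closed_graph_bounded gG_add gG_scale gG_closed.
by exists C => // z Dz; have := gC (exist _ z Dz); rewrite rmorphM /= graph_space_normC.
Qed.

End graph_space.

Theorem lemma2p3 (R : realType) (V W Z : completeNormedModType R[i])
  (hV : is_hilbert V) (hW : is_hilbert W) (hZ : is_hilbert Z)
  (D : set Z) (T : Z -> V * W)
  (hD : linear_subspace D) (hT : linear_on D T) :
  let PVT := fun z => (T z).1 in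
  let PWT := fun z => (T z).2 in
  let i_ := closed_op D T /\ closed_op D PVT in
  let ii_ := closed_op D PVT /\ bounded_graph_norm D PVT PWT in
  let iii_ := closed_op D T /\ bounded_graph_norm D PVT PWT in
  (i_ <-> ii_) /\ (ii_ <-> iii_).
Proof.
move=> PVT PWT i_ ii_ iii_.
have TE : (fun z => (PVT z, PWT z)) = T.
  by apply/funext => z; rewrite /PVT /PWT -surjective_pairing.
have hPV : linear_on D PVT by move=> a x y Dx Dy; rewrite /PVT hT.
have hPW : linear_on D PWT by move=> a x y Dx Dy; rewrite /PWT hT.
rewrite /i_ /ii_ /iii_ -TE.
split; split.
- move=> [T_closed PV_closed]; split=> //.
  exact: (closed_graph_bounded_graph_norm hD hPV PV_closed hPW T_closed).
- by move=> [PV_closed PW_bounded]; split=> //; exact: (closed_op_pair hD hPV).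
- by move=> [PV_closed PW_bounded]; split=> //; exact: (closed_op_pair hD hPV).
- move=> [T_closed PW_bounded]; split=> //.
  exact: (closed_op_fst hD hPV T_closed PW_bounded).
Qed.
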